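(* Let $L>n\ge 0$ and let $q(x)\in\mathrm{GF}(2)[x]/(x^L+1)$ be nonzero, represented as a polynomial of degree exactly $n$. Fix any set $S$ of $n$ bit positions that are consecutive modulo $L$, i.e. $S=\{k \bmod L, (k+1)\bmod L,\dots,(k+n-1)\bmod L\}$ for some integer $k$. Then for every $y\in\mathrm{GF}(2)[x]/(x^L+1)$, the number of $w\in\mathrm{GF}(2)[x]/(x^L+1)$ such that $q(x)w\bmod (x^L+1)$ and $y$ agree in every bit position outside $S$ is exactly $2^n$. (In particular this holds for $S=\{0,1,\dots,n-1\}$, the first $n$ bits.)
   Context: Elements of $\mathrm{GF}(2)[x]/(x^L+1)$ are identified with polynomials $\sum_{i=0}^{L-1}c_ix^i$ over $\mathrm{GF}(2)$; bit position $i$ refers to the coefficient $c_i$ of $x^i$. Two elements are ''equal modulo the positions in $S$'' if their coefficients agree at every position not in $S$. *)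

From HB Require Import structures.
From mathcomp Require Import all_boot all_order all_algebra.
Set Implicit Arguments. Unset Strict Implicit. Unset Printing Implicit Defensive.
Import GRing.Theory Num.Theory.
Local Open Scope ring_scope.

(* An element of GF(2)[x]/(x^L+1), given by its coefficient vector
   (c_0, ..., c_{L-1}); bit position i is coefficient c_i of x^i. *)
Definition cyc_elt (L : nat) := {ffun 'I_L -> 'F_2}.

Definition cyc_poly (L : nat) (c : cyc_elt L) : {poly 'F_2} := \poly_(i < L) (if @insub _ (fun m => (m < L)%N) 'I_L i is Some j then c j else 0).

Definition cyc_of_poly (L : nat) (p : {poly 'F_2}) : cyc_elt L :=
  [ffun i : 'I_L => (p %% ('X^L + 1))`_i].

Definition cyc_mul (L : nat) (q : {poly 'F_2}) (w : cyc_elt L) : cyc_elt L :=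
  cyc_of_poly L (q * cyc_poly w).

Definition eq_mod_pos (L : nat) (S : {set 'I_L}) (a b : cyc_elt L) : bool :=
  [forall i : 'I_L, (i \notin S) ==> (a i == b i)].

Definition consec_pos (L n : nat) (k : int) : {set 'I_L} :=
  [set i : 'I_L | [exists j : 'I_n, (i : nat)%:Z == ((k + (j : nat)%:Z) %% (L : int))%Z]].

From mathcomp Require Import all_boot all_order all_algebra.

Set Implicit Arguments.
Unset Strict Implicit.
Unset Printing Implicit Defensive.
Import GRing.Theory.
Local Open Scope ring_scope.

(* Rotation (multiplication by a power of x) is a bijection of the ring that
   commutes with multiplication by q and moves S to any other block of n
   consecutive positions, so it suffices to treat the window S = {0..n-1}.
   For the window, the map w |-> (top n bits of w, bits of q * w outside the
   window) is injective: the difference D of two preimages has degree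
   < L - n, hence q * D has degree < L and is not reduced, and its vanishing
   coefficients in positions n..L-1 force D = 0 (lemma window_kernel).
   Comparing cardinalities (2^L = 2^n * 2^(L-n)) the map is a bijection, and
   the w agreeing with y outside the window form the preimage of
   F_2^n x {y outside the window}, which has 2^n elements. *)

(* Kernel of the "sliding window" map, over an arbitrary field: if deg q = n,
   deg D < L - n and the product q * D, reduced modulo a modulus of degree L,
   has no coefficients in positions n .. L-1, then D = 0.  Indeed q * D has
   degree < L, so it is not affected by the reduction; its degree would thus
   be < n, while deg (q * D) >= deg q = n for D <> 0. *)
Lemma window_kernel (R : fieldType) (M q D : {poly R}) (L n : nat) :
  size M = L.+1 -> size q = n.+1 -> (size D <= L - n)%N ->
  (forall u, (n <= u < L)%N -> ((q * D) %% M)`_u = 0) -> D = 0.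
Proof.
move=> sizeM sizeq sizeD coef_qD; apply/eqP; apply: contraT => D_neq0.
have q_neq0 : q != 0 by rewrite -size_poly_eq0 sizeq.
have size_qD : size (q * D) = (n + size D)%N by rewrite size_mul // sizeq.
have D_pos : (0 < size D)%N by rewrite size_poly_gt0.
have qD_small : (size (q * D)%R <= L)%N.
  have lt_nL : (n < L)%N by rewrite -subn_gt0 (leq_trans D_pos).
  by rewrite size_qD -(subnKC (ltnW lt_nL)) leq_add2l.
have qD_mod : (q * D) %% M = q * D by rewrite modp_small // sizeM ltnS.
have : (size (q * D)%R <= n)%N.
  apply/leq_sizeP => j le_nj; have [lt_jL | le_Lj] := ltnP j L.
    by rewrite -qD_mod coef_qD ?le_nj.
  by move/leq_sizeP: qD_small; apply.
by rewrite size_qD -{2}(addn0 n) leq_add2l leqNgt D_pos.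
Qed.

(* An injective f : A -> B * C with |A| = |B| * |C| is a bijection, so the
   points whose image has second component c correspond to B x {c}. *)
Lemma card_fiber_snd (A B C : finType) (f : A -> B * C) (c : C) :
  injective f -> #|A| = (#|B| * #|C|)%N ->
  #|[set a | (f a).2 == c]| = #|B|.
Proof.
move=> f_inj cardA.
have f_bij : bijective f by apply: inj_card_bij; rewrite // cardA card_prod.
have -> : [set a | (f a).2 == c] = f @^-1: setX [set: B] [set c].
  by apply/setP => a; rewrite !inE; case: (f a).
by rewrite (on_card_preimset (onW_bij _ f_bij)) cardsX cardsT cards1 muln1.
Qed.

Section CyclicRing.

Variable l : nat.
Local Notation L := l.+1.
Local Notation M := ('X^L + 1 : {poly 'F_2}).
Local Notation elt := (cyc_elt L).

Lemma size_modulus : size M = L.+1.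
Proof. by rewrite -polyC1 size_XnaddC. Qed.

Lemma modulus_neq0 : M != 0.
Proof. by rewrite -size_poly_eq0 size_modulus. Qed.

(* In characteristic 2, x^L = M + 1, so multiplication by x^L is trivial
   modulo M. *)
Lemma modp_XL (p : {poly 'F_2}) : ('X^L * p) %% M = p %% M.
Proof.
have char2 : 2 \in [pchar {poly 'F_2}] by rewrite pchar_poly pchar_Fp.
have -> : 'X^L * p = M * p - p by rewrite mulrDl mul1r addrK.
by rewrite modpD modp_mulr add0r (oppr_pchar2 char2).
Qed.

Lemma modp_Xn (t : nat) : 'X^t %% M = 'X^(t %% L).
Proof.
rewrite {1}(divn_eq t L); elim: (t %/ L)%N => [|a IH].
  by rewrite mul0n add0n modp_small // size_polyXn size_modulus ltnS ltn_pmod.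
by rewrite mulSn -addnA exprD modp_XL.
Qed.

Lemma size_cyc_poly (w : elt) : (size (cyc_poly w) <= L)%N.
Proof. exact: size_poly. Qed.

Lemma cyc_polyE (w : elt) : cyc_poly w = \sum_(i < L) w i *: 'X^i.
Proof.
rewrite /cyc_poly poly_def; apply: eq_bigr => i _.
by case: insubP => [j _ /val_inj -> | ]; rewrite ?ltn_ord.
Qed.

Lemma coef_cyc_poly (w : elt) (i : 'I_L) : (cyc_poly w)`_i = w i.
Proof.
rewrite coef_poly ltn_ord; case: insubP => [j _ /val_inj -> // |].
by rewrite ltn_ord.
Qed.

Lemma cyc_poly_of (p : {poly 'F_2}) : cyc_poly (cyc_of_poly L p) = p %% M.
Proof.
apply/polyP => i; rewrite coef_poly.
have size_mod : (size (p %% M)%R <= L)%N.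
  by rewrite -ltnS -size_modulus ltn_modp modulus_neq0.
case: ltnP => [lt_iL | le_Li]; last by rewrite (leq_sizeP _ _ size_mod).
by rewrite insubT ffunE.
Qed.

Lemma cyc_polyK (w : elt) : cyc_of_poly L (cyc_poly w) = w.
Proof.
apply/ffunP => i; rewrite ffunE modp_small ?coef_cyc_poly //.
by rewrite size_modulus ltnS size_cyc_poly.
Qed.

Definition rot (m : nat) (w : elt) : elt := cyc_of_poly L ('X^m * cyc_poly w).

Lemma rotE (m : nat) (w : elt) (i : 'I_L) : rot m w (i + inZp m) = w i.
Proof.
rewrite ffunE cyc_polyE mulr_sumr.
rewrite (big_morph (fun p => p %% M) (fun p r => modpD M p r) (mod0p M)).
rewrite coef_sum (bigD1 i) //= big1 ?addr0 => [|j ne_ji].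
  rewrite -scalerAr modpZl -exprD modp_Xn coefZ coefXn.
  by rewrite modnDmr addnC eqxx mulr1.
rewrite -scalerAr modpZl -exprD modp_Xn coefZ coefXn.
case: eqP => [eq_ji | _]; last by rewrite mulr0.
case/eqP: ne_ji; apply: (addIr (inZp m : 'I_L)); apply/val_inj => /=.
by rewrite eq_ji modnDmr addnC.
Qed.

Lemma rot_inj (m : nat) : injective (rot m).
Proof.
by move=> w1 w2 eq_rot; apply/ffunP => i; rewrite -(rotE m w1) -(rotE m w2) eq_rot.
Qed.

Lemma rot_mul (m : nat) (q : {poly 'F_2}) (w : elt) :
  rot m (cyc_mul q w) = cyc_mul q (rot m w).
Proof.
by apply/ffunP => i; rewrite !ffunE !cyc_poly_of !modp_mul mulrCA.
Qed.

Lemma eq_mod_pos_rot (m : nat) (S T : {set 'I_L}) (a b : elt) :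
  (forall i, (i \in S) = (i + inZp m \in T)) ->
  eq_mod_pos S a b = eq_mod_pos T (rot m a) (rot m b).
Proof.
move=> memST; apply/forallP/forallP => [eq_ab j | eq_rot i].
  have [i ->] : exists i, j = i + inZp m by exists (j - inZp m); rewrite subrK.
  by rewrite !rotE -memST.
by have := eq_rot (i + inZp m); rewrite -memST !rotE.
Qed.

Definition window (n : nat) : {set 'I_L} := [set i : 'I_L | (i < n)%N].

Lemma mem_consec_pos (n : nat) (k : int) (i : 'I_L) :
  let c : 'I_L := inZp `|(k %% L%:Z)%Z| in
  (i \in consec_pos L n k) = ((i - c)%R < n)%N.
Proof.
move=> c; have k_mod : (k %% L%:Z)%Z = `|(k %% L%:Z)%Z|%:Z.
  by rewrite gez0_abs // modz_ge0.
have modE (j : nat) : ((k + j%:Z) %% L%:Z)%Z = Posz (val (c + inZp j)%R).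
  have lt_kL : (`|(k %% L%:Z)%Z| < L)%N by rewrite -ltz_nat -k_mod ltz_pmod.
  by rewrite -modzDml k_mod -PoszD modz_nat /= modnDmr (modn_small lt_kL).
rewrite inE; apply/existsP/idP => [[j] | lt_in].
  rewrite modE eqz_nat => /eqP/val_inj ->; rewrite addrAC subrr add0r /=.
  exact: leq_ltn_trans (leq_mod j L) (ltn_ord j).
exists (Ordinal lt_in); rewrite modE.
by rewrite -[Ordinal lt_in : nat]/(val (i - c)%R) valZpK addrC subrK.
Qed.

Section Window.

Variables (n : nat) (q : {poly 'F_2}).
Hypotheses (lt_nL : (n < L)%N) (size_q : size q = n.+1).

Definition top (j : 'I_n) : 'I_L := inord (L - n + j)%N.
Definition outside (t : 'I_(L - n)) : 'I_L := inord (n + t)%N.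

Lemma outsideE (t : 'I_(L - n)) : outside t = (n + t)%N :> nat.
Proof. by rewrite inordK // -ltn_subRL. Qed.

Definition coords (w : elt) : {ffun 'I_n -> 'F_2} * {ffun 'I_(L - n) -> 'F_2} :=
  ([ffun j => w (top j)], [ffun t => cyc_mul q w (outside t)]).

Lemma eq_mod_window (a b : elt) :
  eq_mod_pos (window n) a b =
  ([ffun t => a (outside t)] == [ffun t => b (outside t)]).
Proof.
apply/forallP/eqP => [eq_ab | eq_out].
  apply: eq_ffun => t; apply/eqP.
  by have := eq_ab (outside t); rewrite inE outsideE -leqNgt leq_addr.
move=> i; apply/implyP; rewrite inE -leqNgt => le_ni.
have lt_t : (i - n < L - n)%N by rewrite ltn_sub2r.
have -> : i = outside (Ordinal lt_t) by apply/val_inj; rewrite /= outsideE subnKC.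
by move/ffunP: eq_out => /(_ (Ordinal lt_t)); rewrite !ffunE => ->.
Qed.

Lemma coords_inj : injective coords.
Proof.
move=> w1 w2 [/ffunP eq_top /ffunP eq_out].
pose D := cyc_poly w1 - cyc_poly w2.
suff D0 : D = 0.
  by rewrite -(cyc_polyK w1) -(cyc_polyK w2) (subr0_eq D0).
apply: (window_kernel size_modulus size_q) => [|u /andP[le_nu lt_uL]].
  apply/leq_sizeP => j le_j; rewrite coefB.
  have [lt_jL | le_Lj] := ltnP j L; last first.
    by rewrite !nth_default ?subrr // (leq_trans (size_cyc_poly _)).
  have lt_j : (j - (L - n) < n)%N by rewrite ltn_subLR // subnK // ltnW.
  have := eq_top (Ordinal lt_j); rewrite !ffunE /top /= subnKC // => eq_w.
  by rewrite -(inordK lt_jL) !coef_cyc_poly eq_w subrr.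
have lt_t : (u - n < L - n)%N by rewrite ltn_sub2r.
have := eq_out (Ordinal lt_t); rewrite !ffunE /outside /= subnKC // inordK //.
by rewrite mulrBr modpD modpN coefB => ->; rewrite subrr.
Qed.

Lemma card_window_fiber (y : elt) :
  #|[set w | eq_mod_pos (window n) (cyc_mul q w) y]| = (2 ^ n)%N.
Proof.
have -> : [set w | eq_mod_pos (window n) (cyc_mul q w) y] =
          [set w | (coords w).2 == [ffun t => y (outside t)]].
  by apply/setP => w; rewrite !inE eq_mod_window.
rewrite card_fiber_snd ?card_ffun ?card_ord ?card_Fp //; first exact: coords_inj.
by rewrite -expnD subnKC // ltnW.
Qed.

End Window.

End CyclicRing.

Theorem mainTheorem6 (L n : nat) (q : {poly 'F_2}) (k : int) :
  (n < L)%N -> size q = n.+1 ->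
  forall y : cyc_elt L,
    #|[set w : cyc_elt L | eq_mod_pos (consec_pos L n k) (cyc_mul q w) y]| = (2 ^ n)%N.
Proof.
case: L => [//|l] lt_nL size_q y.
set c : 'I_l.+1 := inZp `|(k %% l.+1%:Z)%Z|.
set m := val (- c).
have shift_consec i : (i \in consec_pos l.+1 n k) = (i + inZp m \in window l n).
  by rewrite mem_consec_pos inE valZpK.
rewrite -(card_window_fiber lt_nL size_q (rot m y)).
rewrite -[RHS](card_preimset _ (@rot_inj l m)).
apply: eq_card => w.
by rewrite !inE (eq_mod_pos_rot _ _ shift_consec) rot_mul.
Qed.
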